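(* Let $\mathcal{H}$ be a finite-dimensional real Hilbert space, let $A\colon \mathcal{H}\rightrightarrows\mathcal{H}$ be maximally monotone, let $B\colon \mathcal{H}\to\mathcal{H}$ be monotone and locally Lipschitz continuous, and suppose $(A+B)^{-1}(0)\neq\varnothing$. Fix $\delta\in(0,1)$, $\sigma\in(0,1)$, initial points $x_0,x_{-1}\in\mathcal{H}$ and an initial stepsize $\lambda_{-1}>0$. For $k=0,1,2,\dots$, having $x_k$, $x_{k-1}$ and $\lambda_{k-1}$, choose $\rho_k\in\{1,\sigma^{-1}\}$, set $\lambda_k=\rho_k\lambda_{k-1}\sigma^{i}$ where $i$ is the smallest nonnegative integer such that the point $$x_{k+1} := J_{\lambda_k A}\bigl(x_k - \lambda_k B(x_k) - \lambda_{k-1}(B(x_k)-B(x_{k-1}))\bigr)$$ satisfies $\lambda_k\|B(x_{k+1})-B(x_k)\|\leq \frac{\delta}{2}\|x_{k+1}-x_k\|$, and define $x_{k+1}$ accordingly. Then the sequence $(x_k)$ so generated converges to a point contained in $(A+B)^{-1}(0)$.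
   Context: $J_{\lambda A}:=(I+\lambda A)^{-1}$ denotes the resolvent of $\lambda A$. $B$ is locally Lipschitz if every point has a neighbourhood on which $B$ is Lipschitz. *)

From HB Require Import structures.
From mathcomp Require Import all_boot all_order all_algebra.
From mathcomp Require Import all_classical all_reals all_analysis.
Set Implicit Arguments. Unset Strict Implicit. Unset Printing Implicit Defensive.
Import Order.TTheory GRing.Theory Num.Theory.
Import numFieldNormedType.Exports.
Local Open Scope classical_set_scope.
Local Open Scope ring_scope.

(* The finite-dimensional real Hilbert space H is modelled as 'rV[R]_n
   (R : realType) with the standard Euclidean inner product. *)
Definition ip (R : realType) (n : nat) (u v : 'rV[R]_n) : R := (u *m v^T) 0 0.
Definition enorm (R : realType) (n : nat) (u : 'rV[R]_n) : R := Num.sqrt (ip u u).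

Definition monotone_op (R : realType) (n : nat) (A : 'rV[R]_n -> set 'rV[R]_n) :=
  forall x y u v, A x u -> A y v -> 0 <= ip (x - y) (u - v).

Definition maximally_monotone (R : realType) (n : nat) (A : 'rV[R]_n -> set 'rV[R]_n) :=
  monotone_op A /\
  forall A' : 'rV[R]_n -> set 'rV[R]_n, monotone_op A' ->
    (forall x, A x `<=` A' x) -> A' = A.

Definition monotone_fun (R : realType) (n : nat) (B : 'rV[R]_n -> 'rV[R]_n) :=
  forall x y, 0 <= ip (x - y) (B x - B y).

Definition locally_lipschitz (R : realType) (n : nat) (B : 'rV[R]_n -> 'rV[R]_n) :=
  forall x : 'rV[R]_n, exists2 N : set 'rV[R]_n, nbhs x N &
    exists L : R, forall y z, N y -> N z -> enorm (B y - B z) <= L * enorm (y - z).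

Definition zeros_sum (R : realType) (n : nat) (A : 'rV[R]_n -> set 'rV[R]_n)
  (B : 'rV[R]_n -> 'rV[R]_n) : set 'rV[R]_n :=
  [set x | exists2 u, A x u & u + B x = 0].

(* Resolvent J_{lam A} = (I + lam A)^{-1}: x = J z iff z ∈ x + lam A x.
   Defined as a function through classical choice (it is single-valued and
   everywhere defined for maximally monotone A, lam > 0, by Minty). *)
Definition resolvent (R : realType) (n : nat) (A : 'rV[R]_n -> set 'rV[R]_n)
  (lam : R) (z : 'rV[R]_n) : 'rV[R]_n :=
  xget 0 [set x | exists2 u, A x u & z = x + lam *: u].

From HB Require Import structures.
From mathcomp Require Import all_boot all_order all_algebra.
From mathcomp Require Import all_classical all_reals all_analysis.
From mathcomp Require Import ring lra.
Import Order.TTheory GRing.Theory Num.Theory.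
Import numFieldNormedType.Exports.
Local Open Scope classical_set_scope.
Local Open Scope ring_scope.

(* Minty's theorem, obtained from the Debrunner-Flor lemma by compactness, makes
   the resolvent single valued, so each step produces u_k ∈ A x_{k+1} with
     λ_k (u_k + B x_{k+1}) = (x_k - x_{k+1})
                            + λ_k (B x_{k+1} - B x_k) - λ_{k-1} (B x_k - B x_{k-1}).
   For a zero q of A + B, monotonicity and the linesearch inequality make the energy
     ‖x_k - q‖² - 2 λ_{k-1} ⟨x_k - q, B x_k - B x_{k-1}⟩ + δ/2 ‖x_k - x_{k-1}‖²
   drop by (1 - δ) ‖x_{k+1} - x_k‖² at each step, while it dominates
   (1 - δ/2) ‖x_k - q‖².  Hence the iterates are bounded and successive differences
   vanish.  B is Lipschitz on a ball containing the iterates and all trial points,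
   so a rejected trial stepsize is bounded below in terms of δ, σ and the Lipschitz
   constant, and the stepsizes stay away from 0.  The residual u_k + B x_{k+1}
   therefore tends to 0, and since the graph of a maximally monotone operator is
   closed, every cluster point p is a zero.  The energy estimate with q := p finally
   shows that the whole sequence converges to p. *)

(** * Euclidean structure of row vectors *)

Section Euclidean.
Context {R : realType} {n : nat}.
Implicit Types (u v w : 'rV[R]_n).

Lemma ipE u v : ip u v = \sum_j u ord0 j * v ord0 j.
Proof. by rewrite /ip !mxE; apply: eq_bigr => j _; rewrite mxE. Qed.

Lemma ipC u v : ip u v = ip v u.
Proof. by rewrite !ipE; apply: eq_bigr => j _; rewrite mulrC. Qed.

Lemma ipDl u v w : ip (u + v) w = ip u w + ip v w.
Proof. by rewrite !ipE -big_split; apply: eq_bigr => j _; rewrite mxE mulrDl. Qed.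

Lemma ipZl a u v : ip (a *: u) v = a * ip u v.
Proof. by rewrite !ipE mulr_sumr; apply: eq_bigr => j _; rewrite mxE mulrA. Qed.

Lemma ipNl u v : ip (- u) v = - ip u v.
Proof. by rewrite -scaleN1r ipZl mulN1r. Qed.

Lemma ipBl u v w : ip (u - v) w = ip u w - ip v w.
Proof. by rewrite ipDl ipNl. Qed.

Lemma ip0l v : ip 0 v = 0.
Proof. by rewrite -(scale0r 0) ipZl mul0r. Qed.

Lemma ipDr u v w : ip w (u + v) = ip w u + ip w v.
Proof. by rewrite ipC ipDl ![ip _ w]ipC. Qed.

Lemma ipZr a u v : ip v (a *: u) = a * ip v u.
Proof. by rewrite ipC ipZl ipC. Qed.

Lemma ipNr u v : ip v (- u) = - ip v u.
Proof. by rewrite ipC ipNl ipC. Qed.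

Lemma ipBr u v w : ip w (u - v) = ip w u - ip w v.
Proof. by rewrite ipDr ipNr. Qed.

Lemma ip0r v : ip v 0 = 0.
Proof. by rewrite ipC ip0l. Qed.

Lemma ip_suml (I : Type) (r : seq I) (F : I -> 'rV[R]_n) v :
  ip (\sum_(i <- r) F i) v = \sum_(i <- r) ip (F i) v.
Proof. by elim/big_rec2: _ => [|i a b _ <-]; rewrite ?ip0l ?ipDl. Qed.

Lemma ip_sumr (I : Type) (r : seq I) (F : I -> 'rV[R]_n) v :
  ip v (\sum_(i <- r) F i) = \sum_(i <- r) ip v (F i).
Proof. by rewrite ipC ip_suml; apply: eq_bigr => i _; rewrite ipC. Qed.

Lemma ip_sqrD u v : ip (u + v) (u + v) = ip u u + 2 * ip u v + ip v v.
Proof. rewrite ipDl !ipDr [ip v u]ipC; ring. Qed.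

Lemma ip_sqrB u v : ip (u - v) (u - v) = ip u u - 2 * ip u v + ip v v.
Proof. rewrite ipBl !ipBr [ip v u]ipC; ring. Qed.

Lemma ip_sqr_distC u v : ip (u - v) (u - v) = ip (v - u) (v - u).
Proof. by rewrite -(opprB v u) ipNl ipNr opprK. Qed.

Lemma ip_ge0 u : 0 <= ip u u.
Proof. by rewrite ipE; apply: sumr_ge0 => j _; rewrite -expr2 sqr_ge0. Qed.

Lemma ip_eq0 u : ip u u = 0 -> u = 0.
Proof.
rewrite ipE => /psumr_eq0P u0; apply/rowP => j; rewrite mxE.
by apply/eqP; rewrite -sqrf_eq0 expr2; apply/eqP/u0=> // i _; rewrite -expr2 sqr_ge0.
Qed.

Lemma enorm_ge0 u : 0 <= enorm u.
Proof. exact: sqrtr_ge0. Qed.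

Lemma enorm_sqr u : enorm u ^+ 2 = ip u u.
Proof. exact/sqr_sqrtr/ip_ge0. Qed.

Lemma enorm_le_sqr u c : 0 <= c -> (enorm u <= c) = (ip u u <= c ^+ 2).
Proof. by move=> c0; rewrite -enorm_sqr ler_pXn2r // nnegrE enorm_ge0. Qed.

Lemma enorm_lt_sqr u c : 0 <= c -> (enorm u < c) = (ip u u < c ^+ 2).
Proof. by move=> c0; rewrite -enorm_sqr ltr_pXn2r // nnegrE enorm_ge0. Qed.

Lemma enorm0 : enorm (0 : 'rV[R]_n) = 0.
Proof. by rewrite /enorm ip0l sqrtr0. Qed.

Lemma enorm_eq0 u : enorm u = 0 -> u = 0.
Proof. by move=> u0; apply: ip_eq0; rewrite -enorm_sqr u0 expr0n. Qed.

Lemma enormZ a u : enorm (a *: u) = `|a| * enorm u.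
Proof. by rewrite /enorm ipZl ipZr mulrA -expr2 sqrtrM ?sqr_ge0 // sqrtr_sqr. Qed.

Lemma enormN u : enorm (- u) = enorm u.
Proof. by rewrite -scaleN1r enormZ normrN1 mul1r. Qed.

Lemma enorm_distC u v : enorm (u - v) = enorm (v - u).
Proof. by rewrite -enormN opprB. Qed.

Lemma cauchy_schwarz u v : ip u v <= enorm u * enorm v.
Proof.
have [/enorm_eq0 ->|u0] := eqVneq (enorm u) 0; first by rewrite ip0l enorm0 mul0r.
have [/enorm_eq0 ->|v0] := eqVneq (enorm v) 0; first by rewrite ip0r enorm0 mulr0.
have uv0 : 0 < enorm u * enorm v by rewrite mulr_gt0 // lt_def ?u0 ?v0 enorm_ge0.
have := ip_ge0 (enorm v *: u - enorm u *: v).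
rewrite ip_sqrB !ipZl !ipZr -!enorm_sqr; nra.
Qed.

Lemma cauchy_schwarz_abs u v : `|ip u v| <= enorm u * enorm v.
Proof.
rewrite ler_norml cauchy_schwarz andbT.
by have := cauchy_schwarz (- u) v; rewrite ipNl enormN; lra.
Qed.

Lemma ler_enormD u v : enorm (u + v) <= enorm u + enorm v.
Proof.
rewrite enorm_le_sqr ?addr_ge0 ?enorm_ge0 // ip_sqrD -!enorm_sqr.
have := cauchy_schwarz u v; nra.
Qed.

Lemma ler_enormB u v : enorm (u - v) <= enorm u + enorm v.
Proof. by rewrite -(enormN v) ler_enormD. Qed.

Lemma ler_enorm_distD u v w : enorm (u - w) <= enorm (u - v) + enorm (v - w).
Proof. by have := ler_enormD (u - v) (v - w); rewrite addrA subrK. Qed.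

Lemma ip_abs_le_sqr_half (l c : R) (u g d : 'rV[R]_n) : 0 <= l -> 0 <= c ->
  l * enorm g <= c * enorm d -> `|l * ip u g| <= c / 2 * (ip u u + ip d d).
Proof.
move=> l0 c0 lg; rewrite normrM ger0_norm //; have := cauchy_schwarz_abs u g.
have := sqr_ge0 (enorm u - enorm d); rewrite -!enorm_sqr.
have := enorm_ge0 u; have := enorm_ge0 g; have := normr_ge0 (ip u g); nra.
Qed.

Lemma ip_three_point (a b q : 'rV[R]_n) :
  2 * ip (b - q) (a - b) = ip (a - q) (a - q) - ip (b - q) (b - q) - ip (b - a) (b - a).
Proof.
have -> : a - b = (a - q) - (b - q) by rewrite opprB addrA subrK.
have -> : b - a = (b - q) - (a - q) by rewrite opprB addrA subrK.
move: (a - q) (b - q) => s t.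
by rewrite ipBr !ipBl !ipBr [ip t s]ipC; ring.
Qed.

Lemma thales_ball (a b x : 'rV[R]_n) :
  (0 <= ip (x - a) (b - x)) =
  (enorm (x - 2^-1 *: (a + b)) <= enorm (2^-1 *: (b - a))).
Proof.
set h := 2^-1 *: (b - a); set d := x - 2^-1 *: (a + b).
have -> : x - a = d + h by apply/rowP => i; rewrite !mxE; field.
have -> : b - x = h - d by apply/rowP => i; rewrite !mxE; field.
clearbody h d; rewrite enorm_le_sqr ?enorm_ge0 // enorm_sqr -[ip d d <= _]subr_ge0.
by rewrite ipDl !ipBr [ip h d]ipC; congr (0 <= _); ring.
Qed.

Lemma sum_ip_sub (m : nat) (t : 'I_m -> R) (a b : 'I_m -> 'rV[R]_n) :
  \sum_(i < m) \sum_(j < m) t i * t j * ip (a i - a j) (b i - b j) =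
  2 * ((\sum_(i < m) t i) * (\sum_(i < m) t i * ip (a i) (b i))
       - ip (\sum_(i < m) t i *: a i) (\sum_(i < m) t i *: b i)).
Proof.
have cross : \sum_(i < m) \sum_(j < m) t i * t j * ip (a i) (b j) =
    ip (\sum_(i < m) t i *: a i) (\sum_(i < m) t i *: b i).
  rewrite ip_suml; apply: eq_bigr => i _.
  by rewrite ipZl ip_sumr mulr_sumr; apply: eq_bigr => j _; rewrite ipZr mulrA.
have diag : \sum_(i < m) \sum_(j < m) t i * t j * ip (a i) (b i) =
    (\sum_(i < m) t i) * (\sum_(i < m) t i * ip (a i) (b i)).
  rewrite mulr_sumr; apply: eq_bigr => i _; rewrite mulr_suml.
  by apply: eq_bigr => j _; rewrite mulrCA mulrA.
pose g i j := t i * t j * (ip (a i) (b i) - ip (a i) (b j)).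
have gE : \sum_(i < m) \sum_(j < m) g i j =
    (\sum_(i < m) t i) * (\sum_(i < m) t i * ip (a i) (b i))
    - ip (\sum_(i < m) t i *: a i) (\sum_(i < m) t i *: b i).
  rewrite -diag -cross -sumrB; apply: eq_bigr => i _.
  by rewrite -sumrB; apply: eq_bigr => j _; rewrite /g; ring.
have -> : \sum_(i < m) \sum_(j < m) t i * t j * ip (a i - a j) (b i - b j) =
    \sum_(i < m) \sum_(j < m) g i j + \sum_(i < m) \sum_(j < m) g j i.
  rewrite -big_split; apply: eq_bigr => i _; rewrite -big_split; apply: eq_bigr => j _ /=.
  by rewrite /g ipBl !ipBr; ring.
by rewrite [X in _ + X]exchange_big /= gE; ring.
Qed.

Lemma coord_le_enorm u j : `|u ord0 j| <= enorm u.
Proof.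
rewrite -(@ler_pXn2r _ 2) ?nnegrE ?enorm_ge0 // enorm_sqr real_normK ?num_real //.
rewrite ipE (bigD1 j) //= -expr2 lerDl.
by apply: sumr_ge0 => i _; rewrite -expr2 sqr_ge0.
Qed.

Lemma mx_norm_le_enorm u : `|u| <= enorm u.
Proof.
rewrite [`|u|]/Num.Def.normr /= mx_normrE; apply: bigmax_le => [|[i j] _].
  exact: enorm_ge0.
by rewrite /= (ord1 i); exact: coord_le_enorm.
Qed.

Lemma enorm_le_mx_norm u : enorm u <= n%:R * `|u|.
Proof.
have coord_le_mx j : `|u ord0 j| <= `|u|.
  rewrite [`|u|]/Num.Def.normr /= mx_normrE.
  exact: (le_bigmax _ (fun ij : 'I_1 * 'I_n => `|u ij.1 ij.2|) (ord0, j)).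
rewrite enorm_le_sqr ?mulr_ge0 // ipE.
apply: le_trans (_ : \sum_(j < n) `|u| ^+ 2 <= _).
  apply: ler_sum => j _; rewrite -expr2 -real_normK ?num_real //.
  by rewrite ler_pXn2r // nnegrE normr_ge0.
rewrite sumr_const card_ord -mulr_natl.
have n_le_sqr : n%:R <= (n%:R : R) ^+ 2.
  by rewrite -natrX ler_nat; case: (n) => // m; rewrite expnS leq_pmulr.
have := normr_ge0 u; have : 0 <= (n%:R : R) by []; nra.
Qed.

End Euclidean.

Section EuclideanTopology.
Context {R : realType} {n : nat}.
Implicit Types (c : 'rV[R]_n) (r : R).

Lemma coord_comp_continuous {T : topologicalType} {m : nat} (h : T -> 'rV[R]_m) j :
  continuous h -> continuous (fun x => h x ord0 j).
Proof.
move=> hc t; apply: (@continuous_comp _ _ _ h (fun M : 'rV[R]_m => M ord0 j)).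
  exact: hc.
exact: coord_continuous.
Qed.

Lemma ip_continuous {T : topologicalType} (f g : T -> 'rV[R]_n) :
  continuous f -> continuous g -> continuous (fun t => ip (f t) (g t)).
Proof.
move=> fc gc; have -> : (fun t => ip (f t) (g t)) = fun t => \sum_j f t ord0 j * g t ord0 j.
  by apply/funext => t; rewrite ipE.
apply: (continuous_big add_continuous) => j _ t.
have := coord_comp_continuous _ j fc t; have := coord_comp_continuous _ j gc t.
by move=> gj fj; exact: (continuousM fj gj).
Qed.

Lemma enorm_dist_continuous (c : 'rV[R]_n) : continuous (fun u : 'rV[R]_n => enorm (u - c)).
Proof.
have ipc : continuous (fun v : 'rV[R]_n => ip (v - c) (v - c)).
  by apply: ip_continuous => v; apply: continuousB => //; exact: cst_continuous.
move=> u; have sc := @sqrt_continuous R (ip (u - c) (u - c)).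
exact: (continuous_comp (ipc u) sc).
Qed.

Lemma open_enorm_ball c r : open [set u | enorm (u - c) < r].
Proof. by have := (continuousP _).1 (enorm_dist_continuous c) _ (@open_lt _ r); apply. Qed.

Lemma closed_enorm_ball c r : closed [set u | enorm (u - c) <= r].
Proof. by have := (continuous_closedP _).1 (enorm_dist_continuous c) _ (@closed_le _ r); apply. Qed.

Lemma compact_enorm_ball c r : compact [set u | enorm (u - c) <= r].
Proof.
apply: bounded_closed_compact; last exact: closed_enorm_ball.
exists (r + enorm c); split; first exact: num_real.
move=> M rM u /= ur; apply: le_trans (mx_norm_le_enorm _) _; apply: le_trans (ltW rM).
by have := ler_enorm_distD u c 0; rewrite !subr0; lra.
Qed.

Lemma cluster_enorm (x : nat -> 'rV[R]_n) p : cluster (x @ \oo) p ->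
  forall e, 0 < e -> forall M, exists2 k, (M <= k)%N & enorm (x k - p) < e.
Proof.
move=> clp e e0 M.
have e'0 : 0 < e / (n%:R + 1) by rewrite divr_gt0 // ltr_wpDl.
have [_ [[k /= Mk <-] /=]] : (x @` [set k | (M <= k)%N]) `&` ball p (e / (n%:R + 1)) !=set0.
  by apply: clp; [exists M => // k /= Mk; exists k | exact: nbhsx_ballx].
rewrite -ball_normE /= ltr_pdivlMr ?ltr_wpDl // => pk; exists k => //.
rewrite enorm_distC; apply: le_lt_trans (enorm_le_mx_norm _) _.
have := normr_ge0 (p - x k); nra.
Qed.

Lemma cvg_enorm (x : nat -> 'rV[R]_n) p :
  (forall e, 0 < e -> exists N, forall k, (N <= k)%N -> enorm (x k - p) < e) ->
  x @ \oo --> p.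
Proof.
move=> xp; apply/cvgrPdist_lt => e /xp [N xN]; exists N => // k /xN.
by rewrite distrC; apply: le_lt_trans (mx_norm_le_enorm _).
Qed.

Lemma compact_enorm_ball_cover c r (rad : 'rV[R]_n -> R) : (forall a, 0 < rad a) ->
  exists s : seq 'rV[R]_n,
    forall y, enorm (y - c) <= r -> exists2 a, a \in s & enorm (y - a) < rad a.
Proof.
move=> rad0; have := compact_enorm_ball c r; rewrite compact_cover.
move=> /(_ _ [set a | enorm (a - c) <= r] (fun a => [set y | enorm (y - a) < rad a])).
case=> [a _|y ry|D _ cov]; first exact: open_enorm_ball.
  by exists y => //=; rewrite subrr enorm0.
by exists (finmap.enum_fset D) => y /cov [a Da ya]; exists a.
Qed.

End EuclideanTopology.

Section LocallyLipschitz.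
Context {R : realType} {n : nat} {B : 'rV[R]_n -> 'rV[R]_n}.
Hypothesis Blip : locally_lipschitz B.

Lemma locally_lipschitz_enorm a : exists r L : R, [/\ 0 < r, 0 <= L &
  forall y w, enorm (y - a) < r -> enorm (w - a) < r ->
    enorm (B y - B w) <= L * enorm (y - w)].
Proof.
have [N /nbhs_ballP [r r0 rN] [L NL]] := Blip a.
have ballN y : enorm (y - a) < r -> N y.
  by move=> ya; apply: rN; rewrite -ball_normE /= distrC (le_lt_trans (mx_norm_le_enorm _)).
exists r, (Num.max L 0); split => //; first by rewrite le_max lexx orbT.
move=> y w /ballN Ny /ballN Nw; apply: le_trans (NL _ _ Ny Nw) _.
by rewrite ler_wpM2r ?enorm_ge0 // le_max lexx.
Qed.

Lemma locally_lipschitz_enorm_continuous a e : 0 < e ->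
  exists2 d, 0 < d & forall y, enorm (y - a) < d -> enorm (B y - B a) < e.
Proof.
move=> e0; have [r [L [r0 L0 rL]]] := locally_lipschitz_enorm a.
have eL0 : 0 < e / (L + 1) by rewrite divr_gt0 // ltr_wpDl.
exists (Num.min r (e / (L + 1))) => [|y]; first by rewrite lt_min r0.
rewrite lt_min => /andP[ya]; rewrite ltr_pdivlMr ?ltr_wpDl // => yaL.
apply: le_lt_trans (rL _ _ ya _) _; first by rewrite subrr enorm0.
have := enorm_ge0 (y - a); nra.
Qed.

(* Cover the ball by finitely many balls on which B is Lipschitz: close pairs lie in a
   common such ball, and distant pairs are handled by a bound on B over the ball. *)
Lemma lipschitz_on_enorm_ball c r : exists2 L, 0 < L &
  forall y w, enorm (y - c) <= r -> enorm (w - c) <= r ->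
    enorm (B y - B w) <= L * enorm (y - w).
Proof.
have /choice [rad /choice [Lip radLip]] := locally_lipschitz_enorm.
have rad0 a : 0 < rad a by have [] := radLip a.
have Lip0 a : 0 <= Lip a by have [] := radLip a.
have half_rad0 a : 0 < rad a / 2 by rewrite divr_gt0.
have [s cover] := compact_enorm_ball_cover c r _ half_rad0.
pose rmin := \big[Num.min/1]_(a <- s) (rad a / 2).
pose Lmax := \big[Num.max/0]_(a <- s) Lip a.
pose Mmax := \big[Num.max/0]_(a <- s) (enorm (B a) + Lip a * rad a).
have rmin0 : 0 < rmin.
  by rewrite /rmin; elim/big_ind: _ => // a b; rewrite lt_min => -> ->.
have Mmax0 : 0 <= Mmax by apply: bigmax_ge_id.
have Bbound y : enorm (y - c) <= r -> enorm (B y) <= Mmax.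
  move=> /cover [a sa ya]; have [_ _ aLip] := radLip a.
  have By : enorm (B y - B a) <= Lip a * enorm (y - a).
    by apply: aLip; rewrite ?subrr ?enorm0; move: (rad0 a); lra.
  have := ler_enorm_distD (B y) (B a) 0; rewrite !subr0.
  have : enorm (B a) + Lip a * rad a <= Mmax by exact: (le_bigmax_seq _ _ _ _ sa).
  have := Lip0 a; have := enorm_ge0 (y - a); nra.
have M2r0 : 0 <= 2 * Mmax / rmin by rewrite divr_ge0 ?mulr_ge0 // ltW.
exists (Lmax + 2 * Mmax / rmin + 1).
  by rewrite ltr_wpDl // addr_ge0 //; apply: bigmax_ge_id.
move=> y w ry rw; have yw0 := enorm_ge0 (y - w).
have [ywr|rwy] := ltP (enorm (y - w)) rmin.
  have [a sa ya] := cover y ry; have [_ _ aLip] := radLip a.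
  have rmin_le : rmin <= rad a / 2 by exact: (ge_bigmin_seq _ _ _ _ sa).
  have wa : enorm (w - a) < rad a.
    by have := ler_enorm_distD w y a; rewrite (enorm_distC w y); lra.
  have : Lip a <= Lmax by exact: (le_bigmax_seq _ _ _ _ sa).
  have := aLip y w ltac:(lra) wa; nra.
have := ler_enormB (B y) (B w); have := Bbound _ ry; have := Bbound _ rw.
have : 2 * Mmax <= 2 * Mmax / rmin * enorm (y - w).
  by rewrite mulrAC ler_pdivlMr // ler_wpM2l ?mulr_ge0.
have : 0 <= Lmax by apply: bigmax_ge_id.
nra.
Qed.

End LocallyLipschitz.

(** * Maximally monotone operators and Minty's theorem *)

Section MaximalMonotone.
Context {R : realType} {n : nat} {A : 'rV[R]_n -> set 'rV[R]_n}.
Hypothesis Amax : maximally_monotone A.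

Lemma maximally_monotone_extend p q :
  (forall y v, A y v -> 0 <= ip (p - y) (q - v)) -> A p q.
Proof.
move=> pq; pose A' y := [set v | A y v \/ (y = p /\ v = q)].
have A'mono : monotone_op A'.
  move=> x1 x2 u1 u2 [Axu1|[-> ->]] [Axu2|[-> ->]].
  - exact: Amax.1 Axu1 Axu2.
  - by rewrite -opprB ipNl -(opprB q) ipNr opprK; exact: pq.
  - exact: pq.
  - by rewrite subrr ip0l.
by rewrite -(Amax.2 A' A'mono (fun y v Ayv => or_introl Ayv)); right.
Qed.

Lemma maximally_monotone_closed p q :
  (forall e, 0 < e -> exists t w, [/\ A t w, enorm (t - p) < e & enorm (w - q) < e]) ->
  A p q.
Proof.
move=> approx; apply: maximally_monotone_extend => y v Ayv.
pose K := enorm (q - v) + enorm (p - y) + 1.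
have K0 : 0 < K by rewrite ltr_wpDl ?addr_ge0 ?enorm_ge0.
apply/ler_addgt0Pr => e e0.
have eK0 : 0 < Num.min 1 (e / K) by rewrite lt_min ltr01 divr_gt0.
have [t [w [Atw]]] := approx _ eK0; rewrite !lt_min => /andP[tp1 tpe] /andP[wq1 wqe].
have := Amax.1 _ _ _ _ Atw Ayv.
have -> : ip (t - y) (w - v) = ip (p - y) (q - v) + ip (t - p) (w - v) + ip (p - y) (w - q).
  have -> : t - y = (t - p) + (p - y) by rewrite addrA subrK.
  have -> : w - v = (w - q) + (q - v) by rewrite addrA subrK.
  rewrite !ipDl !ipDr; ring.
have wv : enorm (w - v) <= 1 + enorm (q - v).
  by have := ler_enorm_distD w q v; lra.
have := cauchy_schwarz (t - p) (w - v); have := cauchy_schwarz (p - y) (w - q).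
have : enorm (t - p) * enorm (w - v) <= e / K * (1 + enorm (q - v)).
  exact: ler_pM (enorm_ge0 _) (enorm_ge0 _) (ltW tpe) wv.
have : enorm (p - y) * enorm (w - q) <= enorm (p - y) * (e / K).
  by rewrite ler_wpM2l ?enorm_ge0 // ltW.
have : e / K * (1 + enorm (q - v)) + enorm (p - y) * (e / K) = e.
  by move: (lt0r_neq0 K0); rewrite /K => K0'; field.
lra.
Qed.

Lemma monotone_graph_nonexpansive mu y1 y2 u1 u2 : 0 <= mu -> A y1 u1 -> A y2 u2 ->
  enorm (y1 - y2) <= enorm ((y1 + mu *: u1) - (y2 + mu *: u2)).
Proof.
move=> mu0 Ayu1 Ayu2; have mono := Amax.1 _ _ _ _ Ayu1 Ayu2.
have -> : (y1 + mu *: u1) - (y2 + mu *: u2) = (y1 - y2) + mu *: (u1 - u2).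
  by apply/rowP => i; rewrite !mxE; ring.
have := cauchy_schwarz (y1 - y2) ((y1 - y2) + mu *: (u1 - u2)).
rewrite ipDr ipZr -enorm_sqr; have := mulr_ge0 mu0 mono.
have := enorm_ge0 (y1 - y2); have := enorm_ge0 ((y1 - y2) + mu *: (u1 - u2)); nra.
Qed.

End MaximalMonotone.

Lemma le0_of_quadratic (R : realFieldType) (D E : R) : 0 <= E ->
  (forall s, 0 < s <= 1 -> s * D <= s ^+ 2 * E) -> D <= 0.
Proof.
move=> E0 DE; rewrite leNgt; apply/negP => D0.
have DE1 : 0 < D + E + 1 by lra.
pose s := D / (D + E + 1).
have s0 : 0 < s by rewrite divr_gt0.
have s1 : s <= 1 by rewrite ler_pdivrMr // mul1r; lra.
have := DE s; rewrite s0 s1 expr2 -mulrA ler_pM2l // => /(_ isT) DsE.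
have : s * (D + E + 1) = D by rewrite divfK ?gt_eqF.
have := mulr_gt0 s0 D0; nra.
Qed.

(* The function [psi] is concave on the simplex; at a maximiser
   [t] it is nonpositive by antimonotonicity, and maximality along the segment towards
   each vertex [j] yields the inequality for the pair [(y j, w j)] at x := S t / 2. *)
Section DebrunnerFlor.
Context {R : realType} {n N : nat}.
Variables (y w : 'I_N.+1 -> 'rV[R]_n).
Hypothesis anti : forall i j, ip (y i - y j) (w i - w j) <= 0.

Let simplex := [set t : 'rV[R]_N.+1 | forall i, `[0, 1]%classic (t ord0 i)] `&`
               [set t | \sum_i t ord0 i = 1].
Let S (t : 'rV[R]_N.+1) := \sum_i t ord0 i *: (y i + w i).
Let P (t : 'rV[R]_N.+1) := \sum_i t ord0 i * ip (y i) (w i).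
Let psi t := P t - ip (S t) (S t) / 4.
Let vertex (j : 'I_N.+1) : 'rV[R]_N.+1 := \row_i (i == j)%:R.

Lemma psi_le0 t : simplex t -> psi t <= 0.
Proof.
move=> [t01 t1]; pose Y := \sum_i t ord0 i *: y i; pose W := \sum_i t ord0 i *: w i.
have SE : S t = Y + W.
  by rewrite /S /Y /W -big_split; apply: eq_bigr => i _; rewrite scalerDr.
have t0 i : 0 <= t ord0 i by have /andP[] := t01 i.
have : \sum_i \sum_j t ord0 i * t ord0 j * ip (y i - y j) (w i - w j) <= 0.
  by apply: sumr_le0 => i _; apply: sumr_le0 => j _; rewrite mulr_ge0_le0 ?mulr_ge0.
rewrite sum_ip_sub t1 mul1r -/Y -/W -/(P t).
by have := ip_ge0 (Y - W); rewrite /psi SE ip_sqrB ip_sqrD; lra.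
Qed.

Lemma psi_continuous : continuous psi.
Proof.
have coord i : continuous (fun t : 'rV[R]_N.+1 => t ord0 i) by exact: coord_continuous.
have Sc : continuous S.
  apply: (continuous_big add_continuous) => i _ t.
  exact: (continuousZr_tmp (coord i t)).
have Pc : continuous P.
  apply: (continuous_big add_continuous) => i _ t.
  have ct := coord i t; have cc := @cst_continuous _ R^o (ip (y i) (w i)) t.
  exact: (continuousM ct cc).
move=> t; apply: continuousB; first exact: Pc.
have ic : {for t, continuous (fun t => ip (S t) (S t))} := ip_continuous S S Sc Sc t.
have cc := @cst_continuous _ R^o 4^-1 t.
exact: (continuousM ic cc).
Qed.

Lemma simplex_compact : compact simplex.
Proof.
apply: compact_closedI.
  exact: (@rV_compact R N.+1 (fun=> `[0, 1]%classic) (fun=> @segment_compact R 0 1)).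
have sum_c : continuous (fun t : 'rV[R]_N.+1 => \sum_i t ord0 i).
  by apply: (continuous_big add_continuous) => i _; exact: coord_continuous.
by have := (continuous_closedP _).1 sum_c _ (@closed_eq _ 1); apply.
Qed.

Lemma simplex_vertex j : simplex (vertex j).
Proof.
split => [i|] /=; first by rewrite in_itv /= mxE; case: (i == j); rewrite ?lexx ?ler01.
rewrite (bigD1 j) //= mxE eqxx big1 ?addr0 // => i /negbTE ij.
by rewrite mxE ij.
Qed.

Lemma simplex_segment t j s : simplex t -> 0 <= s -> s <= 1 ->
  simplex ((1 - s) *: t + s *: vertex j).
Proof.
move=> [/= t01 t1] s0 s1; split => [i|] /=.
  move: (t01 i); rewrite /= !in_itv /= !mxE => /andP[ti0 ti1].
  have : 0 <= ((i == j)%:R : R) <= 1 by case: (i == j); rewrite ?lexx ?ler01.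
  move=> /andP[d0 d1]; apply/andP; split; nra.
under eq_bigr => i _ do rewrite !mxE.
rewrite big_split /= -!mulr_sumr t1 (bigD1 j) //= eqxx big1 ?addr0 => [|i /negbTE -> //].
by rewrite mulr1n !mulr1 subrK.
Qed.

Lemma psi_segment t j s : let a := y j + w j in
  psi ((1 - s) *: t + s *: vertex j) = psi t
    + s * (ip (S t) (S t) / 2 - ip (S t) a / 2 + ip (y j) (w j) - P t)
    - s ^+ 2 * ip (a - S t) (a - S t) / 4.
Proof.
move=> a; have vertex_sum (V : lmodType R) (F : 'I_N.+1 -> V) :
    \sum_i vertex j ord0 i *: F i = F j.
  rewrite (bigD1 j) //= mxE eqxx scale1r big1 ?addr0 // => i /negbTE ij.
  by rewrite mxE ij scale0r.
have PE : P ((1 - s) *: t + s *: vertex j) = (1 - s) * P t + s * ip (y j) (w j).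
  have vertex_mul (F : 'I_N.+1 -> R) : \sum_i vertex j ord0 i * F i = F j.
    exact: (vertex_sum R^o F).
  rewrite /P (eq_bigr (fun i => (1 - s) * (t ord0 i * ip (y i) (w i))
    + s * (vertex j ord0 i * ip (y i) (w i)))) => [|i _]; last by rewrite !mxE; ring.
  by rewrite big_split /= -!mulr_sumr vertex_mul.
have SE : S ((1 - s) *: t + s *: vertex j) = (1 - s) *: S t + s *: a.
  rewrite /S (eq_bigr (fun i => (1 - s) *: (t ord0 i *: (y i + w i))
    + s *: (vertex j ord0 i *: (y i + w i)))) => [|i _]; last first.
    by rewrite !mxE !scalerA -scalerDl.
  by rewrite big_split /= -!scaler_sumr vertex_sum.
by rewrite /psi PE SE ip_sqrB ip_sqrD !ipZl !ipZr [ip a (S t)]ipC; field.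
Qed.

Lemma debrunner_flor : exists x, forall j, 0 <= ip (x - y j) (w j - x).
Proof.
have [ts /set_mem simplex_ts ts_max] :=
  compact_EVT_max (ex_intro _ _ (simplex_vertex ord0)) simplex_compact
    (continuous_subspaceT psi_continuous).
exists (2^-1 *: S ts) => j; set a := y j + w j.
have D_le0 : ip (S ts) (S ts) / 2 - ip (S ts) a / 2 + ip (y j) (w j) - P ts <= 0.
  apply: (@le0_of_quadratic _ _ (ip (a - S ts) (a - S ts) / 4)).
    by rewrite divr_ge0 ?ip_ge0.
  move=> s /andP[s0 s1]; rewrite mulrA.
  have := ts_max _ (mem_set (simplex_segment _ j _ simplex_ts (ltW s0) s1)).
  by rewrite psi_segment -/a; lra.
have -> : ip (2^-1 *: S ts - y j) (w j - 2^-1 *: S ts) =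
    ip (S ts) a / 2 - ip (S ts) (S ts) / 4 - ip (y j) (w j).
  by rewrite ipBl !ipBr !ipZl !ipZr /a ipDr [ip (y j) (S ts)]ipC; field.
by have := psi_le0 _ simplex_ts; rewrite /psi; lra.
Qed.

End DebrunnerFlor.

Lemma debrunner_flor_seq {R : realType} {n : nat} (q0 : 'rV[R]_n * 'rV[R]_n) s :
  {in q0 :: s &, forall q q', ip (q.1 - q'.1) (q.2 - q'.2) <= 0} ->
  exists x, {in q0 :: s, forall q, 0 <= ip (x - q.1) (q.2 - x)}.
Proof.
move=> anti; pose q (i : 'I_(size s).+1) := nth q0 (q0 :: s) i.
have qs i : q i \in q0 :: s by rewrite mem_nth.
have [x xq] := debrunner_flor (fun i => (q i).1) (fun i => (q i).2)
  (fun i j => anti _ _ (qs i) (qs j)).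
by exists x => p /(nthP q0) [i si <-]; exact: (xq (Ordinal si)).
Qed.

Section Minty.
Context {R : realType} {n : nat} {A : 'rV[R]_n -> set 'rV[R]_n}.
Hypothesis Amax : maximally_monotone A.

(* The graph pairs (y, z - lam v) are antimonotone, so by the Debrunner-Flor lemma the
   compact Thales balls below have the finite intersection property. *)
Lemma minty_point lam z : 0 < lam ->
  exists x, forall y v, A y v -> 0 <= ip (x - y) (z - lam *: v - x).
Proof.
move=> lam0.
pose C (q : 'rV[R]_n * 'rV[R]_n) := [set x | 0 <= ip (x - q.1) (z - lam *: q.2 - x)].
have Cball q : C q = [set x | enorm (x - 2^-1 *: (q.1 + (z - lam *: q.2)))
                              <= enorm (2^-1 *: (z - lam *: q.2 - q.1))].
  by apply/seteqP; split => x; rewrite /C /= thales_ball.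
have [[q0 Aq0]|graph0] := pselect (exists q, A q.1 q.2); last first.
  by exists 0 => y v Ayv; exfalso; apply: graph0; exists (y, v).
have : compact (C q0) by rewrite Cball; exact: compact_enorm_ball.
rewrite compact_In0 => /(_ _ [set q | A q.1 q.2] (fun q => C q0 `&` C q)) [||x Cx].
- by exists C => // q _; rewrite Cball; exact: closed_enorm_ball.
- move=> D AD; pose s := [seq (q.1, z - lam *: q.2) | q <- finmap.enum_fset D].
  have Aq : {in (q0.1, z - lam *: q0.2) :: s, forall q,
      exists2 v, A q.1 v & q.2 = z - lam *: v}.
    move=> q; rewrite inE => /predU1P[-> | /mapP[p Dp ->]]; first by exists q0.2.
    by exists p.2 => //; exact: set_mem (AD _ Dp).
  have [x Cx] : exists x, {in (q0.1, z - lam *: q0.2) :: s,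
      forall q, 0 <= ip (x - q.1) (q.2 - x)}.
    apply: debrunner_flor_seq => q q' /Aq [v Av ->] /Aq [v' Av' ->].
    have -> : z - lam *: v - (z - lam *: v') = (- lam) *: (v - v').
      by apply/rowP => i; rewrite !mxE; ring.
    rewrite ipZr mulNr oppr_le0 (mulr_ge0 (ltW lam0)) //; exact: Amax.1 _ _ _ _ Av Av'.
  exists x => q Dq; split; first exact: (Cx (_, _) (mem_head _ _)).
  by apply: (Cx (_, _)); rewrite inE; apply/orP; right; apply/mapP; exists q.
- by exists x => y v Ayv; have [] := Cx (y, v) Ayv.
Qed.

Lemma minty lam z : 0 < lam -> exists x u, A x u /\ z = x + lam *: u.
Proof.
move=> lam0; have [x xA] := minty_point lam z lam0.
exists x, (lam^-1 *: (z - x)); split; last first.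
  by rewrite scalerA mulfV ?gt_eqF // scale1r addrC subrK.
apply: (maximally_monotone_extend Amax) => y v Ayv.
have -> : lam^-1 *: (z - x) - v = lam^-1 *: (z - lam *: v - x).
  by apply/rowP => i; rewrite !mxE; field; exact: lt0r_neq0.
by rewrite ipZr mulr_ge0 ?invr_ge0 ?(ltW lam0) ?xA.
Qed.

Lemma resolvent_graph mu z : 0 < mu ->
  A (resolvent A mu z) (mu^-1 *: (z - resolvent A mu z)).
Proof.
move=> mu0; set J := resolvent A mu z.
have [u Au zE] : exists2 u, A J u & z = J + mu *: u.
  apply: (@xgetPex _ 0 [set x | exists2 u, A x u & z = x + mu *: u]).
  by have [x [u [Axu zE]]] := minty mu z mu0; exists x, u.
by rewrite zE addrC addKr scalerA mulVf ?gt_eqF // scale1r.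
Qed.

Lemma resolvent_dist_graph mu w y v : 0 < mu -> A y v ->
  enorm (resolvent A mu w - y) <= enorm (w - (y + mu *: v)).
Proof.
move=> mu0 Ayv.
have := monotone_graph_nonexpansive Amax _ _ _ _ _ (ltW mu0) (resolvent_graph mu w mu0) Ayv.
by rewrite scalerA mulfV ?gt_eqF // scale1r [_ + (w - _)]addrC subrK.
Qed.

End Minty.

Lemma nonincreasing_steps_vanish {R : realType} (a : nat -> R) (m : R) :
  (forall k, a k.+1 <= a k) -> (forall k, m <= a k) ->
  forall e, 0 < e -> exists N, forall k, (N <= k)%N -> a k - a k.+1 < e.
Proof.
move=> a_dec a_ge e e0.
have a_inf : has_inf (range a) by split; [exists (a 0), 0 | exists m => _ [k _ <-]].
have [_ [N _ <-] aN] := inf_adherent e0 a_inf.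
have a_le k : (N <= k)%N -> a k <= a N.
  move=> /subnKC <-; elim: (k - N)%N => [|j IH]; first by rewrite addn0.
  by rewrite addnS; apply: le_trans IH.
exists N => k /a_le akN; have : inf (range a) <= a k.+1 by apply: ge_inf a_inf.2 _ _.
lra.
Qed.

(** * Convergence of the forward-reflected-backward method with linesearch *)

(* Indices are shifted by one with respect to the paper: [x k] is x_{k-1} and
   [lam k] is λ_{k-1}, while [rho k] and [i k] are ρ_k and the exponent i of step k. *)
Section ForwardReflectedBackward.
Context {R : realType} {n : nat}.
Context {A : 'rV[R]_n -> set 'rV[R]_n} {B : 'rV[R]_n -> 'rV[R]_n}.
Context {delta sigma : R} {x : nat -> 'rV[R]_n} {lam rho : nat -> R} {i : nat -> nat}.
Hypothesis Amax : maximally_monotone A.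
Hypothesis Bmono : monotone_fun B.
Hypothesis Blip : locally_lipschitz B.
Hypothesis delta01 : 0 < delta < 1.
Hypothesis sigma01 : 0 < sigma < 1.
Hypothesis lam0_gt0 : 0 < lam 0.
Hypothesis rho_choice : forall k, rho k = 1 \/ rho k = sigma^-1.
Hypothesis lamS : forall k, lam k.+1 = rho k * lam k * sigma ^+ i k.

Definition fbr_point mu k := x k.+1 - mu *: B (x k.+1) - lam k *: (B (x k.+1) - B (x k)).

Hypothesis xS : forall k, x k.+2 = resolvent A (lam k.+1) (fbr_point (lam k.+1) k).
Hypothesis linesearch : forall k,
  lam k.+1 * enorm (B (x k.+2) - B (x k.+1)) <= delta / 2 * enorm (x k.+2 - x k.+1).
Hypothesis linesearch_fail : forall k (j : nat), (j < i k)%N ->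
  let mu := rho k * lam k * sigma ^+ j in
  let y := resolvent A mu (fbr_point mu k) in
  ~ (mu * enorm (B y - B (x k.+1)) <= delta / 2 * enorm (y - x k.+1)).

Lemma rho_ge1 k : 1 <= rho k.
Proof.
have [s0 s1] := andP sigma01.
by case: (rho_choice k) => ->; rewrite ?lexx // invf_ge1 ?ltW.
Qed.

Lemma lam_gt0 k : 0 < lam k.
Proof.
have [s0 _] := andP sigma01.
elim: k => // k IH; rewrite lamS !mulr_gt0 ?exprn_gt0 //.
exact: lt_le_trans ltr01 (rho_ge1 k).
Qed.

Definition fbr_Aval k := (lam k.+1)^-1 *: (fbr_point (lam k.+1) k - x k.+2).

Lemma fbr_Aval_graph k : A (x k.+2) (fbr_Aval k).
Proof. by rewrite /fbr_Aval xS; exact: resolvent_graph Amax _ _ (lam_gt0 k.+1). Qed.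

Lemma fbr_residualE k : lam k.+1 *: (fbr_Aval k + B (x k.+2)) =
  (x k.+1 - x k.+2) + lam k.+1 *: (B (x k.+2) - B (x k.+1))
    - lam k *: (B (x k.+1) - B (x k)).
Proof.
rewrite scalerDr /fbr_Aval scalerA mulfV ?gt_eqF ?lam_gt0 // scale1r /fbr_point.
by apply/rowP => j; rewrite !mxE; ring.
Qed.

Definition lyapunov q k := ip (x k.+1 - q) (x k.+1 - q)
  - 2 * lam k * ip (x k.+1 - q) (B (x k.+1) - B (x k))
  + delta / 2 * ip (x k.+1 - x k) (x k.+1 - x k).

Lemma half_delta_le e : 0 <= e -> delta / 2 * e <= e.
Proof. by move=> e0; have [_ d1] := andP delta01; rewrite ler_piMl //; lra. Qed.

Lemma lam_dB_bounded c r : (forall k, enorm (x k - c) <= r) ->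
  forall k, lam k * enorm (B (x k.+1) - B (x k)) <= 2 * r + lam 0 * enorm (B (x 1) - B (x 0)).
Proof.
move=> xr k; have r0 := le_trans (enorm_ge0 _) (xr 0%N).
case: k => [|k]; first lra.
have := mulr_ge0 (ltW lam0_gt0) (enorm_ge0 (B (x 1) - B (x 0))).
have := ler_enorm_distD (x k.+2) c (x k.+1); rewrite (enorm_distC c).
have := linesearch k; have := half_delta_le _ (enorm_ge0 (x k.+2 - x k.+1)).
have := xr k.+2; have := xr k.+1; lra.
Qed.

Lemma fbr_residual_bound m : lam m.+2 * enorm (fbr_Aval m.+1 + B (x m.+3)) <=
  2 * enorm (x m.+3 - x m.+2) + enorm (x m.+2 - x m.+1).
Proof.
rewrite -[lam m.+2]ger0_norm ?(ltW (lam_gt0 _)) // -enormZ fbr_residualE.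
apply: le_trans (ler_enormB _ _) _; apply: le_trans (lerD (ler_enormD _ _) (lexx _)) _.
rewrite !enormZ !ger0_norm ?(ltW (lam_gt0 _)) // (enorm_distC (x m.+2)).
have := linesearch m.+1; have := half_delta_le _ (enorm_ge0 (x m.+3 - x m.+2)).
have := linesearch m; have := half_delta_le _ (enorm_ge0 (x m.+2 - x m.+1)); lra.
Qed.

Lemma stepsize_succ_ge (L : R) : 0 < L ->
  (forall k mu, 0 < mu -> mu <= 1 ->
     enorm (B (resolvent A mu (fbr_point mu k)) - B (x k.+1))
       <= L * enorm (resolvent A mu (fbr_point mu k) - x k.+1)) ->
  forall k, Num.min (lam k) (Num.min sigma (sigma * delta / (2 * L))) <= lam k.+1.
Proof.
move=> L0 BL k; have [s0 _] := andP sigma01.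
rewrite lamS; case Eik: (i k) => [|j].
  by rewrite expr0 mulr1 ge_min (ler_peMl (ltW (lam_gt0 k)) (rho_ge1 k)).
have := linesearch_fail k j; rewrite Eik ltnSn => /(_ isT) /=.
rewrite exprSr mulrA; set mu := rho k * lam k * sigma ^+ j.
have mu0 : 0 < mu by rewrite !mulr_gt0 ?exprn_gt0 ?lam_gt0 // (lt_le_trans ltr01 (rho_ge1 k)).
rewrite !ge_min; have [mu1 _|mu1 fail] := leP 1 mu.
  by rewrite (ler_peMl (ltW s0) mu1) !orbT.
set y := resolvent A mu (fbr_point mu k) in fail.
have := BL k mu mu0 (ltW mu1); rewrite -/y => By.
have : delta / 2 < mu * L.
  rewrite ltNge; apply: contra_notN fail => muL.
  apply: le_trans (ler_wpM2l (ltW mu0) By) _; rewrite mulrA ler_wpM2r ?enorm_ge0 //.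
move=> muL; apply/orP; right; apply/orP; right.
by rewrite ler_pdivrMr ?mulr_gt0 //; nra.
Qed.

Lemma lyapunov_bounds q m :
  (1 - delta / 2) * ip (x m.+2 - q) (x m.+2 - q) <= lyapunov q m.+1 /\
  lyapunov q m.+1 <= 2 * ip (x m.+2 - q) (x m.+2 - q) + ip (x m.+2 - x m.+1) (x m.+2 - x m.+1).
Proof.
have [d0 d1] := andP delta01.
have := ip_abs_le_sqr_half _ _ (x m.+2 - q) _ _ (ltW (lam_gt0 m.+1))
  (ltW (divr_gt0 d0 (ltr0Sn _ 1))) (linesearch m).
have d1' : 0 <= 1 - delta by lra.
have := mulr_ge0 d1' (ip_ge0 (x m.+2 - q)); have := mulr_ge0 d1' (ip_ge0 (x m.+2 - x m.+1)).
have := ip_ge0 (x m.+2 - q); have := ip_ge0 (x m.+2 - x m.+1).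
by rewrite ler_norml /lyapunov => ? ? ? ? /andP[? ?]; split; lra.
Qed.

Section Zero.
Variable q : 'rV[R]_n.
Hypothesis zero_q : A q (- B q).

Lemma fbr_monotone_ineq m :
  0 <= ip (x m.+3 - q) (x m.+2 - x m.+3)
       + lam m.+2 * ip (x m.+3 - q) (B (x m.+3) - B (x m.+2))
       - lam m.+1 * ip (x m.+3 - q) (B (x m.+2) - B (x m.+1)).
Proof.
have : 0 <= ip (x m.+3 - q) (lam m.+2 *: (fbr_Aval m.+1 + B (x m.+3))).
  rewrite ipZr mulr_ge0 ?(ltW (lam_gt0 _)) //.
  have -> : fbr_Aval m.+1 + B (x m.+3) = (fbr_Aval m.+1 - - B q) + (B (x m.+3) - B q).
    by apply/rowP => j; rewrite !mxE; ring.
  by rewrite ipDr addr_ge0 // ?Bmono //; exact: Amax.1 _ _ _ _ (fbr_Aval_graph m.+1) zero_q.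
by rewrite fbr_residualE !(ipDr, ipNr, ipZr); lra.
Qed.

Lemma lyapunov_descent m : lyapunov q m.+2 <=
  lyapunov q m.+1 - (1 - delta) * ip (x m.+3 - x m.+2) (x m.+3 - x m.+2).
Proof.
have := fbr_monotone_ineq m; have := ip_three_point (x m.+2) (x m.+3) q.
have -> : ip (x m.+3 - q) (B (x m.+2) - B (x m.+1)) =
    ip (x m.+2 - q) (B (x m.+2) - B (x m.+1)) + ip (x m.+3 - x m.+2) (B (x m.+2) - B (x m.+1)).
  by rewrite -ipDl [x m.+2 - q + _]addrC addrA subrK.
have [d0 _] := andP delta01.
have := ip_abs_le_sqr_half _ _ (x m.+3 - x m.+2) _ _ (ltW (lam_gt0 m.+1))
  (ltW (divr_gt0 d0 (ltr0Sn _ 1))) (linesearch m).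
by rewrite ler_norml /lyapunov (ip_sqr_distC (x m.+3)) => /andP[]; lra.
Qed.

Lemma lyapunov_nonincreasing m j : lyapunov q (m + j).+1 <= lyapunov q m.+1.
Proof.
have [_ d1] := andP delta01; have d1' : 0 <= 1 - delta by lra.
elim: j => [|j IH]; first by rewrite addn0.
rewrite addnS; apply: le_trans (lyapunov_descent _) _.
by have := mulr_ge0 d1' (ip_ge0 (x (m + j).+3 - x (m + j).+2)); lra.
Qed.

Lemma iterates_bounded : exists r, forall k, enorm (x k - q) <= r.
Proof.
have [d0 d1] := andP delta01.
exists (enorm (x 0 - q) + enorm (x 1 - q) + Num.sqrt (lyapunov q 1 / (1 - delta / 2))).
have := enorm_ge0 (x 0 - q); have := enorm_ge0 (x 1 - q).
have := sqrtr_ge0 (lyapunov q 1 / (1 - delta / 2)).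
move=> s0 e1 e0 [|[|m]]; try lra.
suff : enorm (x m.+2 - q) <= Num.sqrt (lyapunov q 1 / (1 - delta / 2)) by lra.
apply: ler_wsqrtr; rewrite ler_pdivlMr; last lra.
have [lo _] := lyapunov_bounds q m; have := lyapunov_nonincreasing 0 m.
by rewrite add0n; lra.
Qed.

Lemma trial_points_bounded : exists r, forall k mu, 0 < mu -> mu <= 1 ->
  enorm (resolvent A mu (fbr_point mu k) - q) <= r.
Proof.
have [r xr] := iterates_bounded; have r0 := le_trans (enorm_ge0 _) (xr 0%N).
have [L L0 BL] := lipschitz_on_enorm_ball Blip q r.
exists (r + L * r + (2 * r + lam 0 * enorm (B (x 1) - B (x 0)))) => k mu mu0 mu1.
apply: le_trans (resolvent_dist_graph Amax _ _ _ _ mu0 zero_q) _.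
have -> : fbr_point mu k - (q + mu *: - B q) =
    (x k.+1 - q) - mu *: (B (x k.+1) - B q) - lam k *: (B (x k.+1) - B (x k)).
  by apply/rowP => j; rewrite !mxE; ring.
apply: le_trans (ler_enormB _ _) _; rewrite enormZ ger0_norm ?(ltW (lam_gt0 _)) //.
apply: lerD; last exact: lam_dB_bounded _ _ xr k.
apply: le_trans (ler_enormB _ _) _.
rewrite enormZ (ger0_norm (ltW mu0)); apply: lerD (xr _) _.
have : enorm (B (x k.+1) - B q) <= L * r.
  apply: le_trans (BL _ _ (xr _) _) _; first by rewrite subrr enorm0.
  by rewrite ler_pM2l // xr.
by have := enorm_ge0 (B (x k.+1) - B q); nra.
Qed.

Lemma stepsize_bounded_below : exists2 c, 0 < c & forall k, c <= lam k.
Proof.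
have [s0 _] := andP sigma01; have [d0 _] := andP delta01.
have [r1 xr] := iterates_bounded; have [r2 yr] := trial_points_bounded.
have [L L0 BL] := lipschitz_on_enorm_ball Blip q (Num.max r1 r2).
have r1_le : r1 <= Num.max r1 r2 by rewrite le_max lexx.
have r2_le : r2 <= Num.max r1 r2 by rewrite le_max lexx orbT.
have step := stepsize_succ_ge L L0 (fun k mu mu0 mu1 =>
  BL _ _ (le_trans (yr k mu mu0 mu1) r2_le) (le_trans (xr _) r1_le)).
exists (Num.min (lam 0) (Num.min sigma (sigma * delta / (2 * L)))).
  by rewrite !lt_min lam0_gt0 s0 divr_gt0 ?mulr_gt0.
elim=> [|k IH]; first by rewrite ge_min lexx.
by apply: le_trans (step k); rewrite le_min IH ge_min lexx orbT.
Qed.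

Lemma successive_diff_cvg0 e : 0 < e ->
  exists N, forall k, (N <= k)%N -> enorm (x k.+1 - x k) < e.
Proof.
move=> e0; have [d0 d1] := andP delta01.
have dec m : lyapunov q m.+2 <= lyapunov q m.+1.
  by have := lyapunov_nonincreasing m 1; rewrite addn1.
have ge0 m : 0 <= lyapunov q m.+1.
  have [lo _] := lyapunov_bounds q m; apply: le_trans lo.
  by rewrite mulr_ge0 ?ip_ge0 //; lra.
have e'0 : 0 < (1 - delta) * e ^+ 2 by rewrite mulr_gt0 ?exprn_gt0 //; lra.
have [N HN] := nonincreasing_steps_vanish _ _ dec ge0 _ e'0.
exists N.+2 => -[|[|m]] // /[!ltnS] Nm.
have d1' : 0 < 1 - delta by lra.
have := lyapunov_descent m; have := HN m Nm.
move=> ? ?; rewrite enorm_lt_sqr ?(ltW e0) // -(ltr_pM2l d1'); lra.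
Qed.

Lemma cluster_zero p : cluster (x @ \oo) p -> A p (- B p).
Proof.
move=> clp; have [c c0 c_le] := stepsize_bounded_below.
apply: (maximally_monotone_closed Amax) => e e0.
have e20 : 0 < e / 2 by rewrite divr_gt0.
have [d d0 Bd] := locally_lipschitz_enorm_continuous Blip p (e / 2) e20.
have ce0 : 0 < c * e / 6 by rewrite !divr_gt0 ?mulr_gt0.
have [N xN] := successive_diff_cvg0 _ ce0.
have ed0 : 0 < Num.min e d by rewrite lt_min e0 d0.
have [k /subnKC <-] := cluster_enorm x p clp _ ed0 N.+3.
rewrite !addSn; move: (leq_addr (k - N.+3) N); set m := (N + _)%N => Nm.
rewrite lt_min => /andP[xe xd].
exists (x m.+3), (fbr_Aval m.+1); split => //; first exact: fbr_Aval_graph.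
have := fbr_residual_bound m; have := xN _ (leqW (leqW Nm)); have := xN _ (leqW Nm).
have := c_le m.+2; have := Bd _ xd => Bp lam_ge a_lt b_lt res.
have res_lt : enorm (fbr_Aval m.+1 + B (x m.+3)) < e / 2.
  rewrite -(ltr_pM2l c0); apply: le_lt_trans (ler_wpM2r (enorm_ge0 _) lam_ge) _; lra.
have -> : fbr_Aval m.+1 - - B p = (fbr_Aval m.+1 + B (x m.+3)) - (B (x m.+3) - B p).
  by apply/rowP => j; rewrite !mxE; ring.
by apply: le_lt_trans (ler_enormB _ _) _; lra.
Qed.

End Zero.

Lemma cvg_zero_cluster p : cluster (x @ \oo) p -> A p (- B p) -> x @ \oo --> p.
Proof.
move=> clp zero_p; apply: cvg_enorm => e e0; have [d0 d1] := andP delta01.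
have e30 : 0 < e / 3 by rewrite divr_gt0.
have [N xN] := successive_diff_cvg0 p zero_p _ e30.
have [k /subnKC <-] := cluster_enorm x p clp _ e30 N.+2.
rewrite !addSn; move: (leq_addr (k - N.+2) N); set m := (N + _)%N => Nm xmp.
exists m.+2 => l /subnKC <-; rewrite !addSn; set j := (m + _)%N.
have [_ up] := lyapunov_bounds p m; have [lo _] := lyapunov_bounds p j.
have := lyapunov_nonincreasing p zero_p m (j - m); rewrite subnKC ?leq_addr //.
have i1 : ip (x m.+2 - p) (x m.+2 - p) < (e / 3) ^+ 2.
  by rewrite -enorm_lt_sqr // ltW.
have i2 : ip (x m.+2 - x m.+1) (x m.+2 - x m.+1) < (e / 3) ^+ 2.
  by rewrite -enorm_lt_sqr ?xN ?leqW // ltW.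
have : 0 <= (1 - delta) * ip (x j.+2 - p) (x j.+2 - p) by rewrite mulr_ge0 ?ip_ge0 //; lra.
by rewrite enorm_lt_sqr ?(ltW e0) //; nra.
Qed.

Lemma fbr_linesearch_cvg q : A q (- B q) -> exists2 p, A p (- B p) & x @ \oo --> p.
Proof.
move=> zero_q; have [r xr] := iterates_bounded q zero_q.
have [p [_ clp]] : [set u | enorm (u - q) <= r] `&` cluster (x @ \oo) !=set0.
  by apply: compact_enorm_ball; exists 0%N => // k _; exact: xr.
have zero_p := cluster_zero q zero_q p clp.
by exists p => //; exact: cvg_zero_cluster.
Qed.

End ForwardReflectedBackward.

Theorem theorem3p4 (R : realType) (n : nat)
  (A : 'rV[R]_n -> set 'rV[R]_n) (B : 'rV[R]_n -> 'rV[R]_n)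
  (delta sigma : R) (x : nat -> 'rV[R]_n) (lam : nat -> R)
  (rho : nat -> R) (i : nat -> nat) :
  maximally_monotone A -> monotone_fun B -> locally_lipschitz B ->
  zeros_sum A B !=set0 ->
  0 < delta < 1 -> 0 < sigma < 1 -> 0 < lam 0 ->
  (forall k, rho k = 1 \/ rho k = sigma^-1) ->
  (forall k, lam k.+1 = rho k * lam k * sigma ^+ i k) ->
  (forall k, x k.+2 = resolvent A (lam k.+1)
       (x k.+1 - lam k.+1 *: B (x k.+1) - lam k *: (B (x k.+1) - B (x k)))) ->
  (forall k, lam k.+1 * enorm (B (x k.+2) - B (x k.+1))
               <= delta / 2 * enorm (x k.+2 - x k.+1)) ->
  (forall k (j : nat), (j < i k)%N ->
     let mu := rho k * lam k * sigma ^+ j in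
     let y := resolvent A mu
       (x k.+1 - mu *: B (x k.+1) - lam k *: (B (x k.+1) - B (x k))) in
     ~ (mu * enorm (B y - B (x k.+1)) <= delta / 2 * enorm (y - x k.+1))) ->
  exists2 p : 'rV[R]_n, zeros_sum A B p & x @ \oo --> p.
Proof.
move=> Amax Bmono Blip [z [u Azu uBz]] delta01 sigma01 lam0 rho_choice lamS xS ls ls_fail.
have zero_z : A z (- B z) by rewrite -(addrK (B z) u) uBz sub0r in Azu.
have [p zero_p xp] := fbr_linesearch_cvg Amax Bmono Blip delta01 sigma01 lam0 rho_choice
  lamS xS ls ls_fail z zero_z.
by exists p => //; exists (- B p); rewrite ?addNr.
Qed.
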